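(* Let $C_{abcd}$ be a Weyl tensor at a point of a spacetime with metric $g_{ab}$ of signature $(+,-,-,-)$, let $T_{abcd}$ be its Bel–Robinson tensor, and let $I=\Psi_{ABCD}\Psi^{ABCD}$ where $\Psi_{ABCD}$ is the Weyl spinor. For a unit timelike vector $t^a$ (i.e. $g_{ab}t^at^b=1$) put $P_1(t^a)=T_{abcd}t^at^bt^ct^d$. Then $4P_1(t^a)\geq |I|$ for every unit timelike vector $t^a$. Moreover, $4P_1(t^a)=|I|$ if and only if there exists $\theta\in\mathbb R$ such that ${}^{(\theta)}C_{abcd}t^bt^c=0$, where ${}^{(\theta)}C_{abcd}=\cos(\theta)\,C_{abcd}+\sin(\theta)\,{}^{*}C_{abcd}$.
   Context: ${}^{*}C_{abcd}$ denotes the (Hodge) dual of the Weyl tensor. The Weyl spinor $\Psi_{ABCD}$ is the totally symmetric spinor with $C_{abcd}=\Psi_{ABCD}\epsilon_{A'B'}\epsilon_{C'D'}+\bar\Psi_{A'B'C'D'}\epsilon_{AB}\epsilon_{CD}$, and the Bel–Robinson tensor is $T_{abcd}=\Psi_{ABCD}\bar\Psi_{A'B'C'D'}$ (Penrose–Rindler conventions). *)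

From HB Require Import structures.
From mathcomp Require Import all_boot all_order all_algebra.
From mathcomp Require Import reals trigo.
From mathcomp Require Import complex.

Set Implicit Arguments.
Unset Strict Implicit.
Unset Printing Implicit Defensive.

Import Order.TTheory GRing.Theory Num.Theory.
Local Open Scope ring_scope.

(* Everything is expressed at a single point, in an orthonormal frame
   (e_0 timelike) of the tangent space, so that the metric g_ab has
   components eta = diag(1,-1,-1,-1).  All tensors below are
   given by their components with ALL indices DOWN unless said otherwise. *)

Section Defs.
Variable R : realType.

Definition tensor4 := 'I_4 -> 'I_4 -> 'I_4 -> 'I_4 -> R.

(* Minkowski metric g_ab (numerically equal to its inverse g^ab). *)
Definition eta (a b : 'I_4) : R :=
  if a == b then (if a == 0 :> 'I_4 then 1 else -1) else 0.

Definition is_weyl (C : tensor4) : Prop :=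
  [/\ (forall a b c d, C a b c d = - C b a c d),
      (forall a b c d, C a b c d = - C a b d c),
      (forall a b c d, C a b c d = C c d a b),
      (forall a b c d, C a b c d + C a c d b + C a d b c = 0) &
      (forall b d, \sum_(a < 4) \sum_(c < 4) eta a c * C a b c d = 0)].

(* Levi-Civita symbol e_abcd with e_0123 = 1 (the opposite orientation only
   replaces *C by -*C, which does not affect the statement). *)
Definition levi (a b c d : 'I_4) : R :=
  \det (\matrix_(i < 4, j < 4) ((j == tnth [tuple a; b; c; d] i)%:R : R)).

Definition hdual (C : tensor4) : tensor4 := fun a b c d =>
  2^-1 * \sum_(e < 4) \sum_(f < 4) \sum_(g < 4) \sum_(h < 4)
     levi a b g h * eta g e * eta h f * C e f c d.

Definition rotC (th : R) (C : tensor4) : tensor4 := fun a b c d =>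
  cos th * C a b c d + sin th * hdual C a b c d.

(* ---- spinors (Penrose--Rindler conventions) ---- *)
Definition cr (x : R) : R[i] := Complex x 0.

(* epsilon_{AB} = epsilon^{AB}, with epsilon_{01} = 1 *)
Definition epsS (A B : 'I_2) : R[i] :=
  if (A == 0) && (B == 1) then 1 else if (A == 1) && (B == 0) then -1 else 0.

(* Infeld--van der Waerden symbols sigma^a_{AA'}: V_{AA'} = sigma^a_{AA'} V_a.
   They satisfy g_ab sigma^a_{AA'} sigma^b_{BB'} = eps_AB eps_A'B'. *)
Definition sigma (a : 'I_4) (A A' : 'I_2) : R[i] :=
  cr (Num.sqrt 2)^-1 *
  match val a with
  | 0%N => if A == A' then 1 else 0
  | 1%N => if A == A' then 0 else 1
  | 2%N => if A == A' then 0 else (if A == 0 then Complex 0 1 else Complex 0 (-1))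
  | _ => if A == A' then (if A == 0 then 1 else -1) else 0
  end.

(* sigma_a^{AA'} = g_ab eps^{AB} eps^{A'B'} sigma^b_{BB'}:  T_a = sigma_a^{AA'} T_{AA'} *)
Definition sigmaU (a : 'I_4) (A A' : 'I_2) : R[i] :=
  \sum_(b < 4) \sum_(B < 2) \sum_(B' < 2)
     cr (eta a b) * epsS A B * epsS A' B' * sigma b B B'.

(* Weyl spinor: Psi_ABCD = 1/4 C_{AA'BB'CC'DD'} eps^{A'B'} eps^{C'D'},
   the unique totally symmetric spinor with
   C_abcd = Psi_ABCD eps_A'B' eps_C'D' + conj(Psi)_A'B'C'D' eps_AB eps_CD. *)
Definition weyl_spinor (C : tensor4) (A B C' D : 'I_2) : R[i] :=
  (cr 4)^-1 *
  \sum_(A1 < 2) \sum_(B1 < 2) \sum_(C1 < 2) \sum_(D1 < 2)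
  \sum_(a < 4) \sum_(b < 4) \sum_(c < 4) \sum_(d < 4)
    cr (C a b c d) * sigma a A A1 * sigma b B B1 * sigma c C' C1 * sigma d D D1
      * epsS A1 B1 * epsS C1 D1.

(* I = Psi_ABCD Psi^ABCD, indices raised by kappa^A = eps^{AB} kappa_B *)
Definition invI (C : tensor4) : R[i] :=
  \sum_(A < 2) \sum_(B < 2) \sum_(C' < 2) \sum_(D < 2)
    weyl_spinor C A B C' D *
    \sum_(E < 2) \sum_(F < 2) \sum_(G < 2) \sum_(H < 2)
      epsS A E * epsS B F * epsS C' G * epsS D H * weyl_spinor C E F G H.

(* Bel--Robinson tensor T_abcd = Psi_ABCD conj(Psi)_A'B'C'D' (tensor form) *)
Definition bel_robinson (C : tensor4) (a b c d : 'I_4) : R[i] :=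
  \sum_(A < 2) \sum_(B < 2) \sum_(C' < 2) \sum_(D < 2)
  \sum_(A1 < 2) \sum_(B1 < 2) \sum_(C1 < 2) \sum_(D1 < 2)
    weyl_spinor C A B C' D * conjc (weyl_spinor C A1 B1 C1 D1)
    * sigmaU a A A1 * sigmaU b B B1 * sigmaU c C' C1 * sigmaU d D D1.

(* P_1(t) = T_abcd t^a t^b t^c t^d  (t given by its contravariant components) *)
Definition P1 (C : tensor4) (t : 'I_4 -> R) : R[i] :=
  \sum_(a < 4) \sum_(b < 4) \sum_(c < 4) \sum_(d < 4)
    bel_robinson C a b c d * cr (t a * t b * t c * t d).

Definition minkowski_sq (t : 'I_4 -> R) : R :=
  \sum_(a < 4) \sum_(b < 4) eta a b * t a * t b.

End Defs.

From mathcomp Require Import all_boot all_order all_algebra perm.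
From mathcomp Require Import boolp reals trigo.
From mathcomp Require Import complex.
From mathcomp Require Import ring lra.

(* In an orthonormal frame a Weyl tensor is the bivector block matrix
   [[E, B], [B, -E]] with E, B symmetric and traceless, i.e. it is given by ten reals p,
   and its spinor components are Psi_k = p_(2k) + i p_(2k+1); the dual *C has the same
   form with Psi replaced by i Psi.  For a unit timelike t let E_t, B_t be the electric
   parts C_abcd t^b t^c and *C_abcd t^b t^c.  A direct computation gives
   4 P_1 = <E_t, E_t> + <B_t, B_t> and I = <E_t, E_t> - <B_t, B_t> - 2 i <E_t, B_t>, where
   <X, Y> = g^ac g^bd X_ab Y_cd is positive definite on tensors annihilated by t on both
   sides (t_0^4 <A, A> is a sum of squares).  Hence
   |I|^2 = (4 P_1)^2 - 4 (<E_t, E_t> <B_t, B_t> - <E_t, B_t>^2), and the claim is the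
   Cauchy-Schwarz inequality, with equality iff cos th E_t + sin th B_t = 0 for some th,
   that is iff (th)C_abcd t^b t^c = 0. *)

Set Implicit Arguments.
Unset Strict Implicit.
Unset Printing Implicit Defensive.

Import Order.TTheory GRing.Theory Num.Theory.
Local Open Scope ring_scope.

Local Notation i0 := (@Ordinal 4 0 isT).
Local Notation i1 := (@Ordinal 4 1 isT).
Local Notation i2 := (@Ordinal 4 2 isT).
Local Notation i3 := (@Ordinal 4 3 isT).
Local Notation j0 := (@Ordinal 3 0 isT).
Local Notation j1 := (@Ordinal 3 1 isT).
Local Notation j2 := (@Ordinal 3 2 isT).
Local Notation I0 := (@Ordinal 2 0 isT).
Local Notation I1 := (@Ordinal 2 1 isT).

Lemma ord4P (a : 'I_4) : [\/ a = i0, a = i1, a = i2 | a = i3].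
Proof.
by case: a => -[|[|[|[|//]]]] ?; [constructor 1|constructor 2|constructor 3|constructor 4];
  apply/val_inj.
Qed.

Lemma ord3P (i : 'I_3) : [\/ i = j0, i = j1 | i = j2].
Proof.
by case: i => -[|[|[|//]]] ?; [constructor 1|constructor 2|constructor 3]; apply/val_inj.
Qed.

Lemma ord2P (A : 'I_2) : A = I0 \/ A = I1.
Proof. by case: A => -[|[|//]] ?; [left|right]; apply/val_inj. Qed.

Lemma sum_ord4 (V : nmodType) (F : 'I_4 -> V) :
  \sum_(i < 4) F i = F i0 + F i1 + F i2 + F i3.
Proof.
rewrite !big_ord_recr big_ord0 /= add0r.
by congr (_ + _ + _ + _); congr F; apply/val_inj.
Qed.

Lemma sum_ord3 (V : nmodType) (F : 'I_3 -> V) : \sum_(i < 3) F i = F j0 + F j1 + F j2.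
Proof.
by rewrite !big_ord_recr big_ord0 /= add0r; congr (_ + _ + _); congr F; apply/val_inj.
Qed.

Lemma sum_ord2 (V : nmodType) (F : 'I_2 -> V) : \sum_(A < 2) F A = F I0 + F I1.
Proof. by rewrite !big_ord_recr big_ord0 /= add0r; congr (_ + _); congr F; apply/val_inj. Qed.

Ltac under_sums tac := first [under eq_bigr => ? _ do under_sums tac | tac].

Ltac expand_sum_ord2 :=
  first [under eq_bigr => ? _ do expand_sum_ord2 | idtac]; rewrite ?sum_ord2.

Lemma exchange_big_1_4 (I J : finType) (V : nmodType) (F : I -> J -> J -> J -> J -> V) :
  \sum_i \sum_j1 \sum_j2 \sum_j3 \sum_j4 F i j1 j2 j3 j4 =
  \sum_j1 \sum_j2 \sum_j3 \sum_j4 \sum_i F i j1 j2 j3 j4.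
Proof.
rewrite exchange_big; apply: eq_bigr => j1 _; rewrite exchange_big; apply: eq_bigr => j2 _.
by rewrite exchange_big; apply: eq_bigr => j3 _; rewrite exchange_big.
Qed.

Lemma exchange_big_4_4 (I J : finType) (V : nmodType)
    (F : I -> I -> I -> I -> J -> J -> J -> J -> V) :
  \sum_i1 \sum_i2 \sum_i3 \sum_i4 \sum_j1 \sum_j2 \sum_j3 \sum_j4 F i1 i2 i3 i4 j1 j2 j3 j4 =
  \sum_j1 \sum_j2 \sum_j3 \sum_j4 \sum_i1 \sum_i2 \sum_i3 \sum_i4 F i1 i2 i3 i4 j1 j2 j3 j4.
Proof.
under eq_bigr => i1 _ do under eq_bigr => i2 _ do under eq_bigr => i3 _ do
  rewrite exchange_big_1_4.
under eq_bigr => i1 _ do under eq_bigr => i2 _ do rewrite exchange_big_1_4.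
by under eq_bigr => i1 _ do rewrite exchange_big_1_4; rewrite exchange_big_1_4.
Qed.

Lemma exchange_big_1_8 (I J : finType) (V : nmodType)
    (F : I -> J -> J -> J -> J -> J -> J -> J -> J -> V) :
  \sum_i \sum_j1 \sum_j2 \sum_j3 \sum_j4 \sum_j5 \sum_j6 \sum_j7 \sum_j8
    F i j1 j2 j3 j4 j5 j6 j7 j8 =
  \sum_j1 \sum_j2 \sum_j3 \sum_j4 \sum_j5 \sum_j6 \sum_j7 \sum_j8 \sum_i
    F i j1 j2 j3 j4 j5 j6 j7 j8.
Proof.
rewrite exchange_big; apply: eq_bigr => j1 _; rewrite exchange_big; apply: eq_bigr => j2 _.
rewrite exchange_big; apply: eq_bigr => j3 _; rewrite exchange_big; apply: eq_bigr => j4 _.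
rewrite exchange_big; apply: eq_bigr => j5 _; rewrite exchange_big; apply: eq_bigr => j6 _.
by rewrite exchange_big; apply: eq_bigr => j7 _; rewrite exchange_big.
Qed.

Lemma mulr_suml8 (V : pzRingType) (k : V)
    (F : 'I_2 -> 'I_2 -> 'I_2 -> 'I_2 -> 'I_2 -> 'I_2 -> 'I_2 -> 'I_2 -> V) :
  (\sum_A \sum_B \sum_C \sum_D \sum_A' \sum_B' \sum_C' \sum_D' F A B C D A' B' C' D') * k =
  \sum_A \sum_B \sum_C \sum_D \sum_A' \sum_B' \sum_C' \sum_D' (F A B C D A' B' C' D' * k).
Proof.
rewrite mulr_suml; apply: eq_bigr => A _; rewrite mulr_suml; apply: eq_bigr => B _.
rewrite mulr_suml; apply: eq_bigr => C _; rewrite mulr_suml; apply: eq_bigr => D _.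
rewrite mulr_suml; apply: eq_bigr => A' _; rewrite mulr_suml; apply: eq_bigr => B' _.
by rewrite mulr_suml; apply: eq_bigr => C' _; rewrite mulr_suml.
Qed.

Lemma mulr_sum4 (V : comPzRingType) (x : V) (f g h l : 'I_4 -> V) :
  x * (\sum_(a < 4) f a) * (\sum_(b < 4) g b) * (\sum_(c < 4) h c) * (\sum_(d < 4) l d) =
  \sum_(a < 4) \sum_(b < 4) \sum_(c < 4) \sum_(d < 4) (x * f a * g b * h c * l d).
Proof.
rewrite (big_distrr x) !big_distrl; apply: eq_bigr => a _.
rewrite (big_distrr (x * f a)) !big_distrl; apply: eq_bigr => b _.
rewrite (big_distrr (x * f a * g b)) big_distrl; apply: eq_bigr => c _.
by rewrite (big_distrr (x * f a * g b * h c)).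
Qed.

Lemma mulr_scale4 (V : comPzRingType) (k x a b c d : V) :
  x * (k * a) * (k * b) * (k * c) * (k * d) = x * a * b * c * d * k ^+ 4.
Proof. by ring. Qed.

(** * Weyl tensors in a bivector basis *)

(* The bivector basis: (false, i) stands for e_0 /\ e_(i+1) and (true, i) for its
   spatial dual e_(i+2) /\ e_(i+3), indices mod 3 in 1..3. *)
Definition bivector_rep (x : bool * 'I_3) : 'I_4 * 'I_4 :=
  match x.1, nat_of_ord x.2 with
  | false, 0 => (i0, i1) | false, 1 => (i0, i2) | false, _ => (i0, i3)
  | true, 0 => (i2, i3) | true, 1 => (i3, i1) | true, _ => (i1, i2)
  end.

Lemma sum_bivectors (V : nmodType) (F : bool * 'I_3 -> V) :
  \sum_x F x = \sum_(i < 3) (F (false, i) + F (true, i)).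
Proof.
rewrite (eq_bigr (fun x => F (x.1, x.2))) => [|[] //].
rewrite -(pair_big xpredT xpredT (fun b i => F (b, i))) /= big_bool.
by rewrite big_split; apply: addrC.
Qed.

Lemma sum_antisym_pairs (V : comPzRingType) (K X : 'I_4 -> 'I_4 -> V) :
  (forall a b, K a b = - K b a) -> (forall a, K a a = 0) ->
  \sum_(a < 4) \sum_(b < 4) K a b * X a b =
  \sum_x K (bivector_rep x).1 (bivector_rep x).2 *
         (X (bivector_rep x).1 (bivector_rep x).2 - X (bivector_rep x).2 (bivector_rep x).1).
Proof.
move=> hK hK0; rewrite sum_bivectors !sum_ord3 !sum_ord4 /= !hK0.
rewrite (hK i1 i0) (hK i2 i0) (hK i3 i0) (hK i3 i2) (hK i1 i3) (hK i2 i1); ring.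
Qed.

Section WeylFrame.
Variable R : realType.

(* The sign s and basis element x with e_a /\ e_b = s x; the sign is 0 when a = b. *)
Definition bivector (a b : 'I_4) : R * (bool * 'I_3) :=
  match nat_of_ord a, nat_of_ord b with
  | 0, 1 => (1, (false, j0)) | 1, 0 => (-1, (false, j0))
  | 0, 2 => (1, (false, j1)) | 2, 0 => (-1, (false, j1))
  | 0, 3 => (1, (false, j2)) | 3, 0 => (-1, (false, j2))
  | 2, 3 => (1, (true, j0))  | 3, 2 => (-1, (true, j0))
  | 3, 1 => (1, (true, j1))  | 1, 3 => (-1, (true, j1))
  | 1, 2 => (1, (true, j2))  | 2, 1 => (-1, (true, j2))
  | _, _ => (0, (false, j0))
  end.

Lemma bivector_swap a b : bivector b a = (- (bivector a b).1, (bivector a b).2).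
Proof. by case: (ord4P a) => ->; case: (ord4P b) => -> /=; rewrite ?opprK ?oppr0. Qed.

Lemma bivector_repK x : bivector (bivector_rep x).1 (bivector_rep x).2 = (1, x).
Proof. by case: x => [[] i]; case: (ord3P i) => ->. Qed.

Lemma antisym_bivectorE {K : 'I_4 -> 'I_4 -> R} : (forall a b, K a b = - K b a) ->
  forall a b, K a b =
    (bivector a b).1 * K (bivector_rep (bivector a b).2).1 (bivector_rep (bivector a b).2).2.
Proof.
move=> hK a b; have Kaa c : K c c = 0 by have := hK c c; lra.
by case: (ord4P a) => ->; case: (ord4P b) => -> /=;
  rewrite ?Kaa ?mul1r ?mulN1r ?mul0r // hK opprK.
Qed.

Definition bivector_component (C : tensor4 R) (x y : bool * 'I_3) : R :=
  C (bivector_rep x).1 (bivector_rep x).2 (bivector_rep y).1 (bivector_rep y).2.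

Lemma bivector_expand (C : tensor4 R) :
  (forall a b c d, C a b c d = - C b a c d) -> (forall a b c d, C a b c d = - C a b d c) ->
  forall a b c d, C a b c d =
    (bivector a b).1 * (bivector c d).1 * bivector_component C (bivector a b).2 (bivector c d).2.
Proof.
move=> hA hB a b c d; rewrite (antisym_bivectorE (fun x y => hA x y c d) a b).
set r := bivector_rep _; rewrite (antisym_bivectorE (hB r.1 r.2) c d).
by rewrite /bivector_component mulrA.
Qed.

Definition bivector_block (E B : 'I_3 -> 'I_3 -> R) (x y : bool * 'I_3) : R :=
  match x, y with
  | (false, i), (false, j) => E i j
  | (true, i), (true, j) => - E i j
  | (_, i), (_, j) => B i j
  end.

Definition electric (p : nat -> R) (i j : 'I_3) : R :=
  match nat_of_ord i, nat_of_ord j with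
  | 0, 0 => 2^-1 * (p 0%N + p 8%N) - p 4%N
  | 1, 1 => - 2^-1 * (p 0%N + p 8%N) - p 4%N
  | 2, 2 => 2 * p 4%N
  | 0, 1 | 1, 0 => 2^-1 * (p 1%N - p 9%N)
  | 0, 2 | 2, 0 => p 6%N - p 2%N
  | 1, 2 | 2, 1 => - (p 3%N + p 7%N)
  | _, _ => 0
  end.

Definition dual_coords (p : nat -> R) (k : nat) : R :=
  if odd k then p k.-1 else - p k.+1.

(* The Weyl tensor with electric part [electric p] and magnetic part
   [electric (dual_coords p)]; the parametrisation is the one for which the Weyl spinor
   components are Psi_k = p_(2k) + i p_(2k+1) (weyl_spinor_psi), and [dual_coords]
   multiplies them by i (hdual_weyl_of). *)
Definition weyl_of (p : nat -> R) : tensor4 R := fun a b c d =>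
  (bivector a b).1 * (bivector c d).1 *
  bivector_block (electric p) (electric (dual_coords p)) (bivector a b).2 (bivector c d).2.

Definition weyl_coords (C : tensor4 R) (k : nat) : R :=
  let E i j := bivector_component C (false, i) (false, j) in
  let B i j := bivector_component C (false, i) (true, j) in
  match k with
  | 0 => 2^-1 * (E j0 j0 - E j1 j1) + B j0 j1
  | 1 => E j0 j1 - 2^-1 * (B j0 j0 - B j1 j1)
  | 2 => - 2^-1 * (E j0 j2 + B j1 j2)
  | 3 => 2^-1 * (B j0 j2 - E j1 j2)
  | 4 => 2^-1 * E j2 j2
  | 5 => - 2^-1 * B j2 j2
  | 6 => 2^-1 * (E j0 j2 - B j1 j2)
  | 7 => - 2^-1 * (E j1 j2 + B j0 j2)
  | 8 => 2^-1 * (E j0 j0 - E j1 j1) - B j0 j1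
  | 9 => - E j0 j1 - 2^-1 * (B j0 j0 - B j1 j1)
  | _ => 0
  end.

Lemma weyl_of_antisym (p : nat -> R) a b c d : weyl_of p a b c d = - weyl_of p b a c d.
Proof. by rewrite /weyl_of (bivector_swap a b) /= !mulNr opprK. Qed.

Lemma weyl_of_antisym2 (p : nat -> R) a b c d : weyl_of p a b c d = - weyl_of p a b d c.
Proof. by rewrite /weyl_of (bivector_swap c d) /= mulrN !mulNr opprK. Qed.

Lemma bivector_component_weyl_of (p : nat -> R) x y :
  bivector_component (weyl_of p) x y =
  bivector_block (electric p) (electric (dual_coords p)) x y.
Proof. by rewrite /bivector_component /weyl_of !bivector_repK /= !mul1r. Qed.

Section WeylTensor.
Variable C : tensor4 R.
Hypothesis hC : is_weyl C.

Local Notation Cb := (bivector_component C).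

Lemma weyl_trace (b d : 'I_4) : C i0 b i0 d = C i1 b i1 d + C i2 b i2 d + C i3 b i3 d.
Proof.
case: hC => _ _ _ _ /(_ b d); rewrite !sum_ord4 /eta /=.
rewrite !mul0r !addr0 !add0r !mul1r !mulN1r; lra.
Qed.

Lemma weyl_bivector (a b c d : 'I_4) :
  C a b c d = (bivector a b).1 * (bivector c d).1 * Cb (bivector a b).2 (bivector c d).2.
Proof. by case: hC => hA hB _ _ _; exact: bivector_expand. Qed.

Lemma weyl_bivector_sym x y : Cb x y = Cb y x.
Proof. by case: hC => _ _ hP _ _; exact: hP. Qed.

Ltac weyl_traces :=
  have := weyl_trace i0 i0; have := weyl_trace i1 i1; have := weyl_trace i2 i2;
  have := weyl_trace i3 i3; have := weyl_trace i0 i1; have := weyl_trace i0 i2;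
  have := weyl_trace i0 i3; have := weyl_trace i1 i2; have := weyl_trace i1 i3;
  have := weyl_trace i2 i3; rewrite !weyl_bivector /=;
  have := weyl_bivector_sym (true, j1) (true, j0);
  have := weyl_bivector_sym (true, j2) (true, j0);
  have := weyl_bivector_sym (true, j2) (true, j1);
  have := weyl_bivector_sym (false, j1) (false, j0);
  have := weyl_bivector_sym (false, j2) (false, j0);
  have := weyl_bivector_sym (false, j2) (false, j1).

Lemma weyl_electric_trace :
  Cb (false, j0) (false, j0) + Cb (false, j1) (false, j1) + Cb (false, j2) (false, j2) = 0.
Proof. by weyl_traces; lra. Qed.

Lemma weyl_magnetic_sym i j : Cb (false, i) (true, j) = Cb (false, j) (true, i).
Proof.
have := weyl_bivector_sym (false, j) (true, i).
by case: (ord3P i) => ->; case: (ord3P j) => ->; weyl_traces; lra.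
Qed.

Lemma weyl_magnetic_trace :
  Cb (false, j0) (true, j0) + Cb (false, j1) (true, j1) + Cb (false, j2) (true, j2) = 0.
Proof.
case: hC => _ _ _ /(_ i0 i1 i2 i3) + _; rewrite !weyl_bivector /=.
by have := weyl_bivector_sym (true, j1) (false, j1); lra.
Qed.

Lemma weyl_spatial_block i j : Cb (true, i) (true, j) = - Cb (false, i) (false, j).
Proof.
have := weyl_electric_trace.
by case: (ord3P i) => ->; case: (ord3P j) => ->; weyl_traces; lra.
Qed.

Lemma electric_weyl_coords i j : electric (weyl_coords C) i j = Cb (false, i) (false, j).
Proof.
have := weyl_electric_trace; have := weyl_bivector_sym (false, j1) (false, j0).
have := weyl_bivector_sym (false, j2) (false, j0).
have := weyl_bivector_sym (false, j2) (false, j1).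
by case: (ord3P i) => ->; case: (ord3P j) => ->; rewrite /electric /weyl_coords /=; lra.
Qed.

Lemma magnetic_weyl_coords i j :
  electric (dual_coords (weyl_coords C)) i j = Cb (false, i) (true, j).
Proof.
have := weyl_magnetic_trace; have := weyl_magnetic_sym j1 j0.
have := weyl_magnetic_sym j2 j0; have := weyl_magnetic_sym j2 j1.
by case: (ord3P i) => ->; case: (ord3P j) => ->;
  rewrite /electric /dual_coords /weyl_coords /=; lra.
Qed.

Lemma weyl_of_coords : C = weyl_of (weyl_coords C).
Proof.
apply/funext => a; apply/funext => b; apply/funext => c; apply/funext => d.
rewrite weyl_bivector /weyl_of; congr (_ * _).
case: (bivector a b).2 => [[] i]; case: (bivector c d).2 => [[] j] /=.
- by rewrite electric_weyl_coords weyl_spatial_block.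
- by rewrite magnetic_weyl_coords weyl_bivector_sym weyl_magnetic_sym.
- by rewrite magnetic_weyl_coords.
- by rewrite electric_weyl_coords.
Qed.

End WeylTensor.

(** * The Levi-Civita symbol and the Hodge dual *)

Lemma det_xrow (A : 'M[R]_4) (i1 i2 : 'I_4) : i1 != i2 -> \det (xrow i1 i2 A) = - \det A.
Proof. by move=> ne; rewrite xrowE det_mulmx det_perm odd_tperm ne expr1 mulN1r. Qed.

Lemma levi_tperm (i1 i2 : 'I_4) (x y : 4.-tuple 'I_4) : i1 != i2 ->
  (forall i, tnth y i = tnth x (tperm i1 i2 i)) ->
  \det (\matrix_(i < 4, j < 4) ((j == tnth y i)%:R : R)) =
  - \det (\matrix_(i < 4, j < 4) ((j == tnth x i)%:R : R)).
Proof.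
by move=> ne xy; rewrite -(det_xrow _ ne); congr (\det _); apply/matrixP => i j;
  rewrite !mxE xy.
Qed.

Lemma levi_swap01 a b c d : levi R b a c d = - levi R a b c d.
Proof.
by apply: (@levi_tperm i0 i1) => // i; case: (ord4P i) => ->;
  rewrite ?tpermL ?tpermR ?tpermD.
Qed.

Lemma levi_swap12 a b c d : levi R a c b d = - levi R a b c d.
Proof.
by apply: (@levi_tperm i1 i2) => // i; case: (ord4P i) => ->;
  rewrite ?tpermL ?tpermR ?tpermD.
Qed.

Lemma levi_swap23 a b c d : levi R a b d c = - levi R a b c d.
Proof.
by apply: (@levi_tperm i2 i3) => // i; case: (ord4P i) => ->;
  rewrite ?tpermL ?tpermR ?tpermD.
Qed.

Lemma levi_repeat (i1 i2 : 'I_4) a b c d : i1 != i2 ->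
  tnth [tuple a; b; c; d] i1 = tnth [tuple a; b; c; d] i2 -> levi R a b c d = 0.
Proof. by move=> ne e; apply: (determinant_alternate ne) => j; rewrite !mxE e. Qed.

Lemma levi_rep01 a c d : levi R a a c d = 0. Proof. exact: (@levi_repeat i0 i1). Qed.
Lemma levi_rep02 a b d : levi R a b a d = 0. Proof. exact: (@levi_repeat i0 i2). Qed.
Lemma levi_rep03 a b c : levi R a b c a = 0. Proof. exact: (@levi_repeat i0 i3). Qed.
Lemma levi_rep12 a b d : levi R a b b d = 0. Proof. exact: (@levi_repeat i1 i2). Qed.
Lemma levi_rep13 a b c : levi R a b c b = 0. Proof. exact: (@levi_repeat i1 i3). Qed.
Lemma levi_rep23 a b c : levi R a b c c = 0. Proof. exact: (@levi_repeat i2 i3). Qed.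

Lemma levi0123 : levi R i0 i1 i2 i3 = 1.
Proof.
rewrite /levi -[RHS](det1 R 4); congr (\det _); apply/matrixP => i j; rewrite !mxE.
by case: (ord4P i) => ->; case: (ord4P j) => ->.
Qed.

(* Evaluates [levi R a b c d] at concrete indices by sorting them with transpositions. *)
Ltac levi_eval :=
  repeat match goal with
  | |- context [levi _ ?a ?a _ _] => rewrite levi_rep01
  | |- context [levi _ ?a _ ?a _] => rewrite levi_rep02
  | |- context [levi _ ?a _ _ ?a] => rewrite levi_rep03
  | |- context [levi _ _ ?b ?b _] => rewrite levi_rep12
  | |- context [levi _ _ ?b _ ?b] => rewrite levi_rep13
  | |- context [levi _ _ _ ?c ?c] => rewrite levi_rep23
  | |- context [levi _ ?a ?b ?c ?d] =>
      lazymatch eval compute in (nat_of_ord b < nat_of_ord a)%N with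
      | true => rewrite (levi_swap01 b a c d) end
  | |- context [levi _ ?a ?b ?c ?d] =>
      lazymatch eval compute in (nat_of_ord c < nat_of_ord b)%N with
      | true => rewrite (levi_swap12 a c b d) end
  | |- context [levi _ ?a ?b ?c ?d] =>
      lazymatch eval compute in (nat_of_ord d < nat_of_ord c)%N with
      | true => rewrite (levi_swap23 a b d c) end
  end; rewrite ?levi0123.

Lemma eta_contract (g : 'I_4) (X : 'I_4 -> R) :
  \sum_(e < 4) eta R g e * X e = eta R g g * X g.
Proof.
rewrite (bigD1 g) //= big1 ?addr0 // => e ne.
by rewrite /eta eq_sym (negbTE ne) mul0r.
Qed.

Lemma hdual_diag (C : tensor4 R) a b c d : hdual C a b c d =
  2^-1 * \sum_(g < 4) \sum_(h < 4) levi R a b g h * eta R g g * eta R h h * C g h c d.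
Proof.
rewrite /hdual; congr (_ * _).
under eq_bigr => e _ do rewrite exchange_big.
under eq_bigr => e _ do under eq_bigr => g _ do rewrite exchange_big.
rewrite exchange_big; under eq_bigr => g _ do rewrite exchange_big.
apply: eq_bigr => g _; apply: eq_bigr => h _.
under eq_bigr => e _ do under eq_bigr => f _ do
  rewrite -mulrA [levi _ _ _ _ _ * _]mulrC -!mulrA.
under eq_bigr => e _ do rewrite -big_distrr /=.
by rewrite eta_contract -big_distrr /= eta_contract; ring.
Qed.

Lemma hdual_antisym (C : tensor4 R) a b c d : hdual C a b c d = - hdual C b a c d.
Proof.
rewrite !hdual_diag -mulrN -sumrN; congr (_ * _); apply: eq_bigr => g _.
by rewrite -sumrN; apply: eq_bigr => h _; rewrite levi_swap01 !mulNr.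
Qed.

Lemma hdual_antisym2 (C : tensor4 R) : (forall a b c d, C a b c d = - C a b d c) ->
  forall a b c d, hdual C a b c d = - hdual C a b d c.
Proof.
move=> hB a b c d; rewrite !hdual_diag -mulrN -sumrN; congr (_ * _); apply: eq_bigr => g _.
by rewrite -sumrN; apply: eq_bigr => h _; rewrite hB mulrN.
Qed.

Lemma hdual_bivector (C : tensor4 R) : (forall a b c d, C a b c d = - C b a c d) ->
  forall i y,
  bivector_component (hdual C) (false, i) y = bivector_component C (true, i) y /\
  bivector_component (hdual C) (true, i) y = - bivector_component C (false, i) y.
Proof.
move=> hA i y; rewrite /bivector_component !hdual_diag.
case: (bivector_rep y) => c d /=.
have := hA i0 i1 c d; have := hA i0 i2 c d; have := hA i0 i3 c d.
have := hA i1 i2 c d; have := hA i1 i3 c d; have := hA i2 i3 c d.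
by case: (ord3P i) => -> /=; rewrite !sum_ord4; levi_eval; rewrite /eta /=; split; lra.
Qed.

Lemma electric_dual_dual (p : nat -> R) i j :
  electric (dual_coords (dual_coords p)) i j = - electric p i j.
Proof.
by case: (ord3P i) => ->; case: (ord3P j) => ->; rewrite /electric /dual_coords /=; ring.
Qed.

Lemma hdual_weyl_of (p : nat -> R) : hdual (weyl_of p) = weyl_of (dual_coords p).
Proof.
apply/funext => a; apply/funext => b; apply/funext => c; apply/funext => d.
rewrite (bivector_expand (@hdual_antisym _) (hdual_antisym2 (@weyl_of_antisym2 p))).
rewrite /weyl_of; congr (_ * _).
move: (bivector a b).2 (bivector c d).2 => [[] i] y;
  have [hE hM] := hdual_bivector (@weyl_of_antisym p) i y;
  rewrite ?hE ?hM bivector_component_weyl_of {hE hM}; case: y => [[] j] /=;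
  by rewrite ?electric_dual_dual ?opprK.
Qed.

(** * Spinor components *)

Lemma crE (x : R) : cr x = (x%:C)%C. Proof. by []. Qed.

Lemma crN (x : R) : cr (- x) = - cr x. Proof. by rewrite !crE rmorphN. Qed.

Lemma crV (x : R) : (cr x)^-1 = cr x^-1. Proof. by rewrite !crE fmorphV. Qed.

Definition spin_pair (a b : 'I_4) (A B : 'I_2) : R[i] :=
  \sum_(A' < 2) \sum_(B' < 2) sigma R a A A' * sigma R b B B' * epsS R A' B'.

Definition spin_bivector (x : bool * 'I_3) (A B : 'I_2) : R[i] :=
  spin_pair (bivector_rep x).1 (bivector_rep x).2 A B -
  spin_pair (bivector_rep x).2 (bivector_rep x).1 A B.

Lemma weyl_spinor_pairs (C : tensor4 R) A B C' D :
  weyl_spinor C A B C' D = (cr 4)^-1 * \sum_(a < 4) \sum_(b < 4) \sum_(c < 4) \sum_(d < 4)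
     cr (C a b c d) * spin_pair a b A B * spin_pair c d C' D.
Proof.
rewrite /weyl_spinor exchange_big_4_4; congr (_ * _).
apply: eq_bigr => a _; apply: eq_bigr => b _; apply: eq_bigr => c _; apply: eq_bigr => d _.
by rewrite /spin_pair !sum_ord2; ring.
Qed.

Lemma weyl_spinor_bivector (C : tensor4 R) :
  (forall a b c d, C a b c d = - C b a c d) -> (forall a b c d, C a b c d = - C a b d c) ->
  forall A B C' D, weyl_spinor C A B C' D = (cr 4)^-1 *
    \sum_x \sum_y cr (bivector_component C x y) * spin_bivector x A B * spin_bivector y C' D.
Proof.
move=> hA hB A B C' D; rewrite weyl_spinor_pairs; congr (_ * _).
have C0 a c d : C a a c d = 0 by have := hA a a c d; lra.
have C0' a b c : C a b c c = 0 by have := hB a b c c; lra.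
transitivity (\sum_(a < 4) \sum_(b < 4)
    (\sum_(c < 4) \sum_(d < 4) cr (C a b c d) * spin_pair c d C' D) * spin_pair a b A B).
  apply: eq_bigr => a _; apply: eq_bigr => b _; rewrite mulr_suml; apply: eq_bigr => c _.
  by rewrite mulr_suml; apply: eq_bigr => d _; ring.
rewrite sum_antisym_pairs => [|a b|a]; first last.
- by rewrite big1 // => c _; rewrite big1 // => d _; rewrite C0 mul0r.
- rewrite -sumrN; apply: eq_bigr => c _; rewrite -sumrN; apply: eq_bigr => d _.
  by rewrite hA crN mulNr.
apply: eq_bigr => x _; rewrite sum_antisym_pairs => [|c d|c]; first last.
- by rewrite C0'.
- by rewrite hB crN.
by rewrite mulr_suml; apply: eq_bigr => y _; rewrite /bivector_component /spin_bivector; ring.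
Qed.

Definition spin_basis (i : 'I_3) (A B : 'I_2) : R[i] :=
  match nat_of_ord i, nat_of_ord A, nat_of_ord B with
  | 0, 0, 0 => 1 | 0, 1, 1 => -1
  | 1, 0, 0 | 1, 1, 1 => 'i%C
  | 2, 0, 1 | 2, 1, 0 => -1
  | _, _, _ => 0
  end.

Lemma spin_bivectorE x A B :
  spin_bivector x A B = (if x.1 then - 'i%C else 1) * spin_basis x.2 A B.
Proof.
have s2 : (Num.sqrt 2)^-1 * (Num.sqrt 2)^-1 = 2^-1 :> R.
  by rewrite -invfM -expr2 sqr_sqrtr // ler0n.
case: x => [[] i]; case: (ord3P i) => ->; case: (ord2P A) => ->; case: (ord2P B) => ->;
  rewrite /spin_bivector /spin_pair !sum_ord2 /sigma /epsS /=;
  by apply/eqP; rewrite eq_complex /=; apply/andP; split; apply/eqP; lra.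
Qed.

Lemma self_dual_block (e b s t : R[i]) :
  e * s * t + b * s * (- 'i%C * t) + b * (- 'i%C * s) * t +
  (- e) * (- 'i%C * s) * (- 'i%C * t) = 2 * ((e - 'i%C * b) * s * t).
Proof.
transitivity (2 * ((e - 'i%C * b) * s * t) - (1 + 'i%C ^+ 2) * e * s * t); first by ring.
by rewrite sqr_i addrN !mul0r subr0.
Qed.

Lemma weyl_spinor_weyl_of (p : nat -> R) A B C D :
  weyl_spinor (weyl_of p) A B C D = cr 2^-1 * \sum_(i < 3) \sum_(j < 3)
    (cr (electric p i j) - 'i%C * cr (electric (dual_coords p) i j)) *
    spin_basis i A B * spin_basis j C D.
Proof.
rewrite weyl_spinor_bivector; [|exact: weyl_of_antisym|exact: weyl_of_antisym2].
rewrite sum_bivectors; under eq_bigr => i _ do rewrite !sum_bivectors -big_split /=.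
transitivity (cr 4^-1 * \sum_(i < 3) \sum_(j < 3) (2 * ((cr (electric p i j) -
    'i%C * cr (electric (dual_coords p) i j)) * spin_basis i A B * spin_basis j C D))).
  rewrite crV; congr (_ * _); apply: eq_bigr => i _; apply: eq_bigr => j _.
  by rewrite -self_dual_block !bivector_component_weyl_of !spin_bivectorE /= crN; ring.
under eq_bigr => i _ do rewrite -mulr_sumr.
rewrite -mulr_sumr mulrA; congr (_ * _).
by apply/eqP; rewrite eq_complex /=; apply/andP; split; apply/eqP; field.
Qed.

(* Kept folded by [simpl], so that [invI_weyl_of] is a ring identity in the Psi_k. *)
Definition psi (p : nat -> R) (k : nat) : R[i] := Complex (p k.*2) (p k.*2.+1).
Arguments psi : simpl never.

Lemma weyl_spinor_psi (p : nat -> R) A B C D :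
  weyl_spinor (weyl_of p) A B C D = psi p (A + B + C + D)%N.
Proof.
rewrite weyl_spinor_weyl_of !sum_ord3.
by case: (ord2P A) => ->; case: (ord2P B) => ->; case: (ord2P C) => ->;
  case: (ord2P D) => ->; rewrite /spin_basis /electric /dual_coords /psi /=;
  apply/eqP; rewrite eq_complex /=; apply/andP; split; apply/eqP; field.
Qed.

Lemma invI_weyl_of (p : nat -> R) :
  invI (weyl_of p) = 2 * psi p 0 * psi p 4 - 8 * psi p 1 * psi p 3 + 6 * psi p 2 ^+ 2.
Proof.
rewrite /invI; expand_sum_ord2.
rewrite !weyl_spinor_psi /epsS /=; cbv beta iota delta [addn addn_rec nat_of_ord].
by ring.
Qed.

(** * The Bel-Robinson energy and the invariant through electric and magnetic parts *)

Definition spin_vector (t : 'I_4 -> R) (A A' : 'I_2) : R[i] :=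
  \sum_(a < 4) sigmaU R a A A' * cr (t a).

Lemma P1_spinor (C : tensor4 R) t : P1 C t =
  \sum_(A < 2) \sum_(B < 2) \sum_(C' < 2) \sum_(D < 2)
  \sum_(A' < 2) \sum_(B' < 2) \sum_(C'' < 2) \sum_(D' < 2)
    weyl_spinor C A B C' D * conjc (weyl_spinor C A' B' C'' D') *
    spin_vector t A A' * spin_vector t B B' * spin_vector t C' C'' * spin_vector t D D'.
Proof.
rewrite /P1 /bel_robinson.
under eq_bigr => a _ do under eq_bigr => b _ do under eq_bigr => c _ do
  under eq_bigr => d _ do rewrite mulr_suml8.
under eq_bigr => a _ do under eq_bigr => b _ do under eq_bigr => c _ do
  rewrite exchange_big_1_8.
under eq_bigr => a _ do under eq_bigr => b _ do rewrite exchange_big_1_8.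
under eq_bigr => a _ do rewrite exchange_big_1_8.
rewrite exchange_big_1_8.
apply: eq_bigr => A _; apply: eq_bigr => B _; apply: eq_bigr => C' _; apply: eq_bigr => D _.
apply: eq_bigr => A' _; apply: eq_bigr => B' _; apply: eq_bigr => C'' _.
apply: eq_bigr => D' _; rewrite /spin_vector mulr_sum4.
apply: eq_bigr => a _; apply: eq_bigr => b _; apply: eq_bigr => c _; apply: eq_bigr => d _.
by rewrite !crE !rmorphM /=; ring.
Qed.

Definition spin_hermitian (t : 'I_4 -> R) (A A' : 'I_2) : R[i] :=
  match nat_of_ord A, nat_of_ord A' with
  | 0, 0 => cr (t i0 + t i3)
  | 0, _ => Complex (t i1) (- t i2)
  | _, 0 => Complex (t i1) (t i2)
  | _, _ => cr (t i0 - t i3)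
  end.

Lemma cr_eta_contract (a : 'I_4) (X : 'I_4 -> R[i]) :
  \sum_(b < 4) cr (eta R a b) * X b = cr (eta R a a) * X a.
Proof.
by rewrite sum_ord4; case: (ord4P a) => ->;
  rewrite /eta /= (_ : cr 0 = 0) // !mul0r ?add0r ?addr0.
Qed.

Lemma sigmaU_diag a A A' : sigmaU R a A A' =
  cr (eta R a a) * \sum_(B < 2) \sum_(B' < 2) epsS R A B * epsS R A' B' * sigma R a B B'.
Proof.
rewrite /sigmaU -(cr_eta_contract a (fun b => \sum_(B < 2) \sum_(B' < 2)
  epsS R A B * epsS R A' B' * sigma R b B B')).
apply: eq_bigr => b _; rewrite mulr_sumr; apply: eq_bigr => B _.
by rewrite mulr_sumr; apply: eq_bigr => B' _; ring.
Qed.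

Lemma spin_vectorE t A A' :
  spin_vector t A A' = cr (Num.sqrt 2)^-1 * spin_hermitian t A A'.
Proof.
rewrite /spin_vector; under eq_bigr => a _ do rewrite sigmaU_diag.
by case: (ord2P A) => ->; case: (ord2P A') => ->;
  rewrite !sum_ord4 !sum_ord2 /sigma /epsS /eta /spin_hermitian /=;
  apply/eqP; rewrite eq_complex /=; apply/andP; split; apply/eqP; ring.
Qed.

Definition electric_part (C : tensor4 R) (t : 'I_4 -> R) (a d : 'I_4) : R :=
  \sum_(b < 4) \sum_(c < 4) C a b c d * t b * t c.

Definition minkowski_sign (a : 'I_4) : R := if nat_of_ord a is 0 then 1 else -1.

Definition tensor_dot (X Y : 'I_4 -> 'I_4 -> R) : R :=
  \sum_(a < 4) \sum_(d < 4) minkowski_sign a * minkowski_sign d * X a d * Y a d.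

Lemma electric_partE (C : tensor4 R) t a d : electric_part C t a d =
  C a i0 i0 d * t i0 * t i0 + C a i0 i1 d * t i0 * t i1 + C a i0 i2 d * t i0 * t i2 +
  C a i0 i3 d * t i0 * t i3 + C a i1 i0 d * t i1 * t i0 + C a i1 i1 d * t i1 * t i1 +
  C a i1 i2 d * t i1 * t i2 + C a i1 i3 d * t i1 * t i3 + C a i2 i0 d * t i2 * t i0 +
  C a i2 i1 d * t i2 * t i1 + C a i2 i2 d * t i2 * t i2 + C a i2 i3 d * t i2 * t i3 +
  C a i3 i0 d * t i3 * t i0 + C a i3 i1 d * t i3 * t i1 + C a i3 i2 d * t i3 * t i2 +
  C a i3 i3 d * t i3 * t i3.
Proof. by rewrite /electric_part !sum_ord4 !addrA. Qed.

Lemma tensor_dotE (X Y : 'I_4 -> 'I_4 -> R) : tensor_dot X Y =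
  X i0 i0 * Y i0 i0 - X i0 i1 * Y i0 i1 - X i0 i2 * Y i0 i2 - X i0 i3 * Y i0 i3
  - X i1 i0 * Y i1 i0 + X i1 i1 * Y i1 i1 + X i1 i2 * Y i1 i2 + X i1 i3 * Y i1 i3
  - X i2 i0 * Y i2 i0 + X i2 i1 * Y i2 i1 + X i2 i2 * Y i2 i2 + X i2 i3 * Y i2 i3
  - X i3 i0 * Y i3 i0 + X i3 i1 * Y i3 i1 + X i3 i2 * Y i3 i2 + X i3 i3 * Y i3 i3.
Proof. by rewrite /tensor_dot !sum_ord4 /minkowski_sign /=; ring. Qed.

Lemma minkowski_sqE (t : 'I_4 -> R) :
  minkowski_sq t = t i0 ^+ 2 - t i1 ^+ 2 - t i2 ^+ 2 - t i3 ^+ 2.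
Proof. by rewrite /minkowski_sq !sum_ord4 /eta /=; ring. Qed.

Ltac weyl_of_eval :=
  rewrite ?tensor_dotE ?minkowski_sqE !electric_partE /weyl_of;
  cbv beta iota delta [bivector bivector_block electric dual_coords nat_of_ord
                       fst snd odd negb predn].

Lemma bel_robinson_electric_magnetic (p : nat -> R) (t : 'I_4 -> R) :
  \sum_(A < 2) \sum_(B < 2) \sum_(C < 2) \sum_(D < 2)
  \sum_(A' < 2) \sum_(B' < 2) \sum_(C' < 2) \sum_(D' < 2)
    psi p (A + B + C + D)%N * conjc (psi p (A' + B' + C' + D')%N) *
    spin_hermitian t A A' * spin_hermitian t B B' * spin_hermitian t C C' *
    spin_hermitian t D D' =
  cr (tensor_dot (electric_part (weyl_of p) t) (electric_part (weyl_of p) t) +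
      tensor_dot (electric_part (weyl_of (dual_coords p)) t)
                 (electric_part (weyl_of (dual_coords p)) t)).
Proof.
weyl_of_eval; expand_sum_ord2.
cbv beta iota delta [addn addn_rec nat_of_ord].
rewrite /psi /spin_hermitian /=.
by apply/eqP; rewrite eq_complex /=; apply/andP; split; apply/eqP; [field | ring].
Qed.

Lemma P1_weyl_of (p : nat -> R) (t : 'I_4 -> R) :
  4%:R * P1 (weyl_of p) t =
  cr (tensor_dot (electric_part (weyl_of p) t) (electric_part (weyl_of p) t) +
      tensor_dot (electric_part (weyl_of (dual_coords p)) t)
                 (electric_part (weyl_of (dual_coords p)) t)).
Proof.
have s4 : cr ((Num.sqrt 2)^-1 : R) ^+ 4 = cr 4^-1.
  rewrite crE -rmorphXn (_ : _ ^+ 4 = ((Num.sqrt 2)^-1 * (Num.sqrt 2)^-1) ^+ 2); last by ring.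
  by rewrite -invfM -expr2 sqr_sqrtr ?ler0n // exprVn -natrX.
rewrite P1_spinor; under_sums ltac:(rewrite !weyl_spinor_psi !spin_vectorE mulr_scale4).
rewrite -mulr_suml8 bel_robinson_electric_magnetic s4.
by apply/eqP; rewrite eq_complex /=; apply/andP; split; apply/eqP; field.
Qed.

Lemma invI_weyl_of_electric (p : nat -> R) (t : 'I_4 -> R) :
  cr (minkowski_sq t ^+ 2) * invI (weyl_of p) =
  Complex (tensor_dot (electric_part (weyl_of p) t) (electric_part (weyl_of p) t) -
           tensor_dot (electric_part (weyl_of (dual_coords p)) t)
                      (electric_part (weyl_of (dual_coords p)) t))
          (- 2 * tensor_dot (electric_part (weyl_of p) t)
                            (electric_part (weyl_of (dual_coords p)) t)).
Proof.
rewrite invI_weyl_of /psi; weyl_of_eval.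
by apply/eqP; rewrite eq_complex /=; apply/andP; split; apply/eqP; field.
Qed.

(** * Positivity and the Cauchy-Schwarz inequality *)

Lemma sum_antisym_quadratic (I : finType) (K : I -> I -> R) (x : I -> R) :
  (forall c d, K c d = - K d c) -> \sum_c \sum_d K c d * x c * x d = 0.
Proof.
move=> hK; set S := (X in X = 0).
suff : S = - S by lra.
rewrite {1}/S exchange_big -sumrN; apply: eq_bigr => c _.
by rewrite -sumrN; apply: eq_bigr => d _; rewrite hK; ring.
Qed.

Lemma electric_part_row (C : tensor4 R) t : (forall a b c d, C a b c d = - C a b d c) ->
  forall a, \sum_(d < 4) electric_part C t a d * t d = 0.
Proof.
move=> hB a; rewrite /electric_part.
under eq_bigr => d _ do rewrite mulr_suml.
under eq_bigr => d _ do under eq_bigr => b _ do rewrite mulr_suml.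
rewrite exchange_big; under eq_bigr => b _ do rewrite exchange_big.
apply: big1 => b _.
transitivity (\sum_(c < 4) \sum_(d < 4) (C a b c d * t b) * t c * t d); first by [].
by apply: sum_antisym_quadratic => c d; rewrite hB mulNr.
Qed.

Lemma electric_part_col (C : tensor4 R) t : (forall a b c d, C a b c d = - C b a c d) ->
  forall d, \sum_(a < 4) t a * electric_part C t a d = 0.
Proof.
move=> hA d; rewrite /electric_part.
under eq_bigr => a _ do rewrite mulr_sumr.
under eq_bigr => a _ do under eq_bigr => b _ do rewrite mulr_sumr.
under eq_bigr => a _ do rewrite exchange_big.
rewrite exchange_big; apply: big1 => c _.
transitivity (\sum_(a < 4) \sum_(b < 4) (C a b c d * t c) * t a * t b).
  by apply: eq_bigr => a _; apply: eq_bigr => b _; ring.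
by apply: sum_antisym_quadratic => a b; rewrite hA mulNr.
Qed.

Definition spatial (i : 'I_3) : 'I_4 :=
  match nat_of_ord i with 0 => i1 | 1 => i2 | _ => i3 end.

Definition spatial_block (A : 'I_4 -> 'I_4 -> R) : 'M[R]_3 :=
  \matrix_(i, j) A (spatial i) (spatial j).

Definition cross_matrix (t : 'I_4 -> R) : 'M[R]_3 := \matrix_(i, j)
  match nat_of_ord i, nat_of_ord j with
  | 0, 1 => - t i3 | 0, 2 => t i2
  | 1, 0 => t i3   | 1, 2 => - t i1
  | 2, 0 => - t i2 | 2, 1 => t i1
  | _, _ => 0
  end.

Definition frobenius m n (M : 'M[R]_(m, n)) : R := \sum_i \sum_j M i j ^+ 2.

Lemma frobeniusE (M : 'M[R]_3) : frobenius M =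
  M j0 j0 ^+ 2 + M j0 j1 ^+ 2 + M j0 j2 ^+ 2 + M j1 j0 ^+ 2 + M j1 j1 ^+ 2 +
  M j1 j2 ^+ 2 + M j2 j0 ^+ 2 + M j2 j1 ^+ 2 + M j2 j2 ^+ 2.
Proof. by rewrite /frobenius !sum_ord3 !addrA. Qed.

Lemma mulmx3E (M N : 'M[R]_3) i j :
  (M *m N) i j = M i j0 * N j0 j + M i j1 * N j1 j + M i j2 * N j2 j.
Proof. by rewrite mxE sum_ord3. Qed.

Lemma frobenius_ge0 m n (M : 'M[R]_(m, n)) : 0 <= frobenius M.
Proof. by apply: sumr_ge0 => i _; apply: sumr_ge0 => j _; exact: sqr_ge0. Qed.

Lemma frobenius_eq0 m n (M : 'M[R]_(m, n)) : frobenius M = 0 -> M = 0.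
Proof.
move=> /eqP; rewrite psumr_eq0 => [/allP M0|i _]; last first.
  by apply: sumr_ge0 => j _; exact: sqr_ge0.
apply/matrixP => i j; rewrite mxE; apply/eqP; rewrite -sqrf_eq0.
move: (M0 i (mem_index_enum i)); rewrite psumr_eq0 => [/allP /(_ j (mem_index_enum j))|] //.
by move=> k _; exact: sqr_ge0.
Qed.

Section TimelikeOrthogonal.
Variables (t : 'I_4 -> R) (A : 'I_4 -> 'I_4 -> R).
Hypothesis hrow : forall a, \sum_(d < 4) A a d * t d = 0.
Hypothesis hcol : forall d, \sum_(a < 4) t a * A a d = 0.

Lemma orthogonal_col0 (t0 : t i0 != 0) a :
  A a i0 = - (A a i1 * t i1 + A a i2 * t i2 + A a i3 * t i3) / t i0.
Proof. by apply: (mulIf t0); rewrite divfK //; have := hrow a; rewrite sum_ord4; lra. Qed.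

Lemma orthogonal_row0 (t0 : t i0 != 0) d :
  A i0 d = - (t i1 * A i1 d + t i2 * A i2 d + t i3 * A i3 d) / t i0.
Proof. by apply: (mulIf t0); rewrite divfK //; have := hcol d; rewrite sum_ord4; lra. Qed.

(* The constraints express the time row and column of A through its spatial block, and
   g(t, t) = t_0^2 - |t|^2 with |t|^2 I - t t^T = K^T K for the cross-product matrix K. *)
Lemma tensor_dot_sos (t0 : t i0 != 0) : t i0 ^+ 4 * tensor_dot A A =
  minkowski_sq t ^+ 2 * frobenius (spatial_block A) +
  minkowski_sq t * (frobenius (cross_matrix t *m spatial_block A) +
                    frobenius (spatial_block A *m cross_matrix t)) +
  frobenius (cross_matrix t *m spatial_block A *m cross_matrix t).
Proof.
rewrite !frobeniusE !mulmx3E !mxE /spatial /=.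
rewrite tensor_dotE minkowski_sqE (orthogonal_col0 t0 i0) !(orthogonal_col0 t0).
by rewrite !(orthogonal_row0 t0); field.
Qed.

Lemma tensor_dot_definite : minkowski_sq t = 1 ->
  0 <= tensor_dot A A /\ (tensor_dot A A = 0 -> forall a d, A a d = 0).
Proof.
move=> ht; have t0 : t i0 != 0.
  apply/eqP => t00; move: ht; rewrite minkowski_sqE t00 expr0n /=.
  by have := sqr_ge0 (t i1); have := sqr_ge0 (t i2); have := sqr_ge0 (t i3); lra.
have t4 : 0 < t i0 ^+ 4 by rewrite exprn_even_gt0.
have sos := tensor_dot_sos t0; rewrite ht expr1n !mul1r in sos.
have f1 := frobenius_ge0 (spatial_block A).
have f2 := frobenius_ge0 (cross_matrix t *m spatial_block A).
have f3 := frobenius_ge0 (spatial_block A *m cross_matrix t).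
have f4 := frobenius_ge0 (cross_matrix t *m spatial_block A *m cross_matrix t).
split; first by rewrite -(pmulr_rge0 _ t4) sos; lra.
move=> A0; have /frobenius_eq0/matrixP Ahat0 : frobenius (spatial_block A) = 0.
  by have := mulr0 (t i0 ^+ 4); rewrite -A0 sos; lra.
have Aij i j : A (spatial i) (spatial j) = 0 by have := Ahat0 i j; rewrite !mxE.
move=> a d; case: (ord4P a) => ->; case: (ord4P d) => ->;
  rewrite ?(orthogonal_col0 t0) ?(orthogonal_row0 t0) ?(Aij j0 j0) ?(Aij j0 j1) ?(Aij j0 j2)
    ?(Aij j1 j0) ?(Aij j1 j1) ?(Aij j1 j2) ?(Aij j2 j0) ?(Aij j2 j1) ?(Aij j2 j2); ring.
Qed.

End TimelikeOrthogonal.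

Lemma tensor_dotC (X Y : 'I_4 -> 'I_4 -> R) : tensor_dot X Y = tensor_dot Y X.
Proof. by apply: eq_bigr => a _; apply: eq_bigr => d _; ring. Qed.

Lemma tensor_dotDl x y (X Y Z : 'I_4 -> 'I_4 -> R) :
  tensor_dot (fun a d => x * X a d + y * Y a d) Z = x * tensor_dot X Z + y * tensor_dot Y Z.
Proof.
rewrite /tensor_dot !mulr_sumr -big_split; apply: eq_bigr => a _ /=.
by rewrite !mulr_sumr -big_split; apply: eq_bigr => d _ /=; ring.
Qed.

Lemma tensor_dot0l (X Y : 'I_4 -> 'I_4 -> R) : (forall a d, X a d = 0) -> tensor_dot X Y = 0.
Proof. by move=> X0; apply: big1 => a _; apply: big1 => d _; rewrite X0 mulr0 mul0r. Qed.

Section CauchySchwarz.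
Variables (t : 'I_4 -> R) (E B : 'I_4 -> 'I_4 -> R).
Hypothesis ht : minkowski_sq t = 1.
Hypothesis Erow : forall a, \sum_(d < 4) E a d * t d = 0.
Hypothesis Ecol : forall d, \sum_(a < 4) t a * E a d = 0.
Hypothesis Brow : forall a, \sum_(d < 4) B a d * t d = 0.
Hypothesis Bcol : forall d, \sum_(a < 4) t a * B a d = 0.

Local Notation combination x y := (fun a d => x * E a d + y * B a d).

Lemma combination_definite x y :
  0 <= tensor_dot (combination x y) (combination x y) /\
  (tensor_dot (combination x y) (combination x y) = 0 ->
   forall a d, x * E a d + y * B a d = 0).
Proof.
apply: tensor_dot_definite ht => [a|d].
  rewrite (eq_bigr (fun d => x * (E a d * t d) + y * (B a d * t d))) => [|d _]; last by ring.
  by rewrite big_split /= -!mulr_sumr Erow Brow !mulr0 addr0.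
rewrite (eq_bigr (fun a => x * (t a * E a d) + y * (t a * B a d))) => [|a _]; last by ring.
by rewrite big_split /= -!mulr_sumr Ecol Bcol !mulr0 addr0.
Qed.

Lemma tensor_dot_combination x y :
  tensor_dot (combination x y) (combination x y) =
  x ^+ 2 * tensor_dot E E + 2 * x * y * tensor_dot E B + y ^+ 2 * tensor_dot B B.
Proof.
rewrite tensor_dotDl [tensor_dot E _]tensor_dotC [tensor_dot B _]tensor_dotC !tensor_dotDl.
by rewrite [tensor_dot B E]tensor_dotC; ring.
Qed.

Lemma cauchy_schwarz : tensor_dot E B ^+ 2 <= tensor_dot E E * tensor_dot B B.
Proof.
set X := tensor_dot E E; set Y := tensor_dot B B; set Z := tensor_dot E B.
have q x y : 0 <= x ^+ 2 * X + 2 * x * y * Z + y ^+ 2 * Y.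
  by rewrite -tensor_dot_combination; exact: (combination_definite x y).1.
have X_ge0 : 0 <= X by have := q 1 0; rewrite expr0n expr1n /=; lra.
have [X0|Xn0] := eqVneq X 0.
  suff -> : Z = 0 by rewrite X0 expr0n mul0r.
  apply: tensor_dot0l => a d; have := (combination_definite 1 0).2.
  rewrite tensor_dot_combination -/X -/Y -/Z X0 => /(_ ltac:(ring)) /(_ a d); lra.
rewrite -subr_ge0 -(@pmulr_rge0 _ X); first by have := q Z (- X); lra.
by rewrite lt_def Xn0 X_ge0.
Qed.

Lemma cauchy_schwarz_eq : tensor_dot E B ^+ 2 = tensor_dot E E * tensor_dot B B <->
  exists th : R, forall a d, cos th * E a d + sin th * B a d = 0.
Proof.
set X := tensor_dot E E; set Y := tensor_dot B B; set Z := tensor_dot E B.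
split=> [XYZ | [th hth]].
  have [Y0|Yn0] := eqVneq Y 0.
    exists (pi / 2) => a d; rewrite cos_pihalf sin_pihalf mul0r mul1r add0r.
    have := (combination_definite 0 1).2; rewrite tensor_dot_combination -/X -/Y -/Z Y0.
    by move=> /(_ ltac:(ring)) /(_ a d); lra.
  have hE a d : Y * E a d + - Z * B a d = 0.
    apply: (combination_definite Y (- Z)).2; rewrite tensor_dot_combination -/X -/Y -/Z.
    transitivity (Y * (X * Y - Z ^+ 2)); first by ring.
    by rewrite XYZ subrr mulr0.
  set th := atan (- (Z / Y)); exists th => a d.
  have cth : cos th != 0 by rewrite cos_atan invr_eq0 sqrtr_eq0 -ltNge ltr_pwDl // sqr_ge0.
  have sth : sin th = - (Z / Y) * cos th by rewrite -[in RHS](atanK (- (Z / Y))) divfK.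
  transitivity (cos th / Y * (Y * E a d + - Z * B a d)); first by rewrite sth; field.
  by rewrite hE mulr0.
have e1 : cos th * X + sin th * Z = 0.
  by rewrite /X /Z -[tensor_dot E B]tensor_dotC -tensor_dotDl tensor_dot0l.
have e2 : cos th * Z + sin th * Y = 0 by rewrite /Y /Z -tensor_dotDl tensor_dot0l.
transitivity ((cos th ^+ 2 + sin th ^+ 2) * (X * Y)); last by rewrite cos2Dsin2 mul1r.
transitivity ((cos th ^+ 2 + sin th ^+ 2) * Z ^+ 2); first by rewrite cos2Dsin2 mul1r.
apply/eqP; rewrite -subr_eq0 -mulrBr; apply/eqP.
transitivity ((cos th * X + sin th * Z) * (sin th * Z - cos th * Y) +
  (cos th * Z + sin th * Y) * (cos th * Z - sin th * X)); first by ring.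
by rewrite e1 e2 !mul0r addr0.
Qed.

End CauchySchwarz.

Lemma norm_gram (X Y Z : R) : 0 <= X -> 0 <= Y -> Z ^+ 2 <= X * Y ->
  `|Complex (X - Y) (- 2 * Z)| <= cr (X + Y) /\
  (cr (X + Y) = `|Complex (X - Y) (- 2 * Z)| <-> Z ^+ 2 = X * Y).
Proof.
move=> X_ge0 Y_ge0 CS; have XY_ge0 : 0 <= X + Y by lra.
have D_ge0 : 0 <= (X + Y) ^+ 2 - 4 * (X * Y - Z ^+ 2).
  by have := sqr_ge0 (X - Y); have := sqr_ge0 Z; nra.
rewrite normc_def /= (_ : _ + _ = (X + Y) ^+ 2 - 4 * (X * Y - Z ^+ 2)); last by ring.
split.
  rewrite lecE /= eqxx /= -[X in _ <= X](ger0_norm XY_ge0) -sqrtr_sqr.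
  by rewrite ler_sqrt ?sqr_ge0 //; lra.
split=> [[] | XYZ].
  by move=> /(congr1 (fun x => x ^+ 2)); rewrite sqr_sqrtr //; lra.
by rewrite XYZ subrr mulr0 subr0 sqrtr_sqr ger0_norm.
Qed.

Lemma rotC_electric th (C : tensor4 R) t a d :
  \sum_(b < 4) \sum_(c < 4) rotC th C a b c d * t b * t c =
  cos th * electric_part C t a d + sin th * electric_part (hdual C) t a d.
Proof.
rewrite /rotC /electric_part !mulr_sumr -big_split; apply: eq_bigr => b _ /=.
by rewrite !mulr_sumr -big_split; apply: eq_bigr => c _ /=; ring.
Qed.

Lemma weyl_bel_robinson_bound (C : tensor4 R) (t : 'I_4 -> R) :
  is_weyl C -> minkowski_sq t = 1 ->
  `|invI C| <= 4%:R * P1 C t /\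
  (4%:R * P1 C t = `|invI C| <->
   exists th : R, forall a d, \sum_(b < 4) \sum_(c < 4) rotC th C a b c d * t b * t c = 0).
Proof.
move=> hC ht; have [hA hB _ _ _] := hC.
set p := weyl_coords C; have hW : C = weyl_of p := weyl_of_coords hC.
set E := electric_part C t; set B := electric_part (hdual C) t.
have Erow := electric_part_row t hB; have Ecol := electric_part_col t hA.
have Brow := electric_part_row t (hdual_antisym2 hB).
have Bcol := electric_part_col t (@hdual_antisym C).
have hP : 4%:R * P1 C t = cr (tensor_dot E E + tensor_dot B B).
  by rewrite /E /B hW hdual_weyl_of P1_weyl_of.
have hI : invI C = Complex (tensor_dot E E - tensor_dot B B) (- 2 * tensor_dot E B).
  have := invI_weyl_of_electric p t; rewrite ht expr1n -hdual_weyl_of -hW -/E -/B.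
  by rewrite (_ : cr 1 = 1) // mul1r.
have [bound equality] := norm_gram (tensor_dot_definite Erow Ecol ht).1
  (tensor_dot_definite Brow Bcol ht).1 (cauchy_schwarz ht Erow Ecol Brow Bcol).
rewrite hP hI; split=> //; rewrite equality (cauchy_schwarz_eq ht Erow Ecol Brow Bcol).
by split=> -[th h]; exists th => a d; move: (h a d); rewrite rotC_electric.
Qed.

End WeylFrame.

Theorem theorem2 (R : realType) (C : tensor4 R) (hC : is_weyl C) :
  (forall t : 'I_4 -> R, minkowski_sq t = 1 -> `|invI C| <= 4%:R * P1 C t)
  /\
  (forall t : 'I_4 -> R, minkowski_sq t = 1 ->
     (4%:R * P1 C t = `|invI C| <->
      exists th : R, forall a d : 'I_4,
        \sum_(b < 4) \sum_(c < 4) rotC th C a b c d * t b * t c = 0)).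
Proof. by split=> t ht; have [] := weyl_bel_robinson_bound hC ht. Qed.
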